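(* There exists a connected highly arc transitive digraph $D$ with an epimorphism $\varphi:D\to Z$ onto the integer-line digraph such that all fibers $\varphi^{-1}(i)$, $i\in\mathbb{Z}$, are finite, and whose associated digraph $\Delta(D)$ is not complete bipartite.
   Context: The integer-line digraph is $Z=(\mathbb{Z},\{(i,i+1)\mid i\in\mathbb{Z}\})$; an epimorphism is a surjective digraph homomorphism. An $n$-arc is a sequence of directed edges $e_0,\dots,e_{n-1}$ with the terminal vertex of $e_i$ equal to the initial vertex of $e_{i+1}$; a digraph is highly arc transitive if for every $n\in\mathbb{N}$ its automorphism group acts transitively on its (nonempty set of) $n$-arcs. An alternating walk is a sequence of edges $e_0,\dots,e_{n-1}$ in which consecutive edges alternately share their initial vertex and their terminal vertex. Two edges are reachable from each other if some alternating walk contains both; this is an equivalence relation. For an edge $e$, $\Delta(e)$ is the subgraph spanned by the reachability class of $e$; in a highly arc transitive digraph all $\Delta(e)$ are isomorphic and their common isomorphism type is the associated digraph $\Delta(D)$. *)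

From Stdlib Require Import ZArith List Relations.
Import ListNotations.
Open Scope Z_scope.

Section Digraph.
Variable V : Type.
Variable E : V -> V -> Prop.

Definition is_edge (e : V * V) : Prop := E (fst e) (snd e).

Definition connected_digraph : Prop :=
  forall x y : V, clos_refl_sym_trans V E x y.

Definition is_automorphism (f : V -> V) : Prop :=
  (exists g : V -> V, (forall x, g (f x) = x) /\ (forall y, f (g y) = y)) /\
  (forall x y, E x y <-> E (f x) (f y)).

Fixpoint chained (l : list (V * V)) : Prop :=
  match l with
  | [] => True
  | e :: l' =>
      match l' with
      | [] => True
      | e' :: _ => snd e = fst e' /\ chained l'
      end
  end.

Definition is_arc (n : nat) (l : list (V * V)) : Prop :=
  length l = n /\ Forall is_edge l /\ chained l.

Definition map_edge (f : V -> V) (e : V * V) : V * V := (f (fst e), f (snd e)).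

Definition highly_arc_transitive : Prop :=
  forall n : nat,
    (exists a, is_arc n a) /\
    (forall a b, is_arc n a -> is_arc n b ->
       exists f, is_automorphism f /\ map (map_edge f) a = b).

(* Alternating sequences: consecutive edges alternately share their initial
   vertex and their terminal vertex; the flag says which comes next. *)
Fixpoint alt_from (share_init : bool) (l : list (V * V)) : Prop :=
  match l with
  | [] => True
  | e :: l' =>
      match l' with
      | [] => True
      | e' :: _ =>
          (if share_init then fst e = fst e' else snd e = snd e') /\
          alt_from (negb share_init) l'
      end
  end.

Definition alternating_walk (l : list (V * V)) : Prop :=
  l <> [] /\ Forall is_edge l /\ exists b, alt_from b l.

Definition reachable (e f : V * V) : Prop :=
  exists l, alternating_walk l /\ In e l /\ In f l.

(* Delta(e): the subgraph spanned by the reachability class of e. *)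
Definition Delta_edge (e f : V * V) : Prop := is_edge f /\ reachable e f.
Definition Delta_vertex (e : V * V) (v : V) : Prop :=
  exists f, Delta_edge e f /\ (v = fst f \/ v = snd f).

Definition Delta_complete_bipartite (e : V * V) : Prop :=
  exists A B : V -> Prop,
    (forall v, ~ (A v /\ B v)) /\
    (forall v, Delta_vertex e v <-> A v \/ B v) /\
    (forall x y, Delta_edge e (x, y) <-> A x /\ B y).

Definition is_hom_to_Zline (phi : V -> Z) : Prop :=
  forall x y, E x y -> phi y = phi x + 1.

Definition is_epi_to_Zline (phi : V -> Z) : Prop :=
  is_hom_to_Zline phi /\
  (forall i : Z, exists v, phi v = i) /\
  (forall i : Z, exists x y, E x y /\ phi x = i /\ phi y = i + 1).

Definition finite_fibers (phi : V -> Z) : Prop :=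
  forall i : Z, exists l : list V, forall v, phi v = i -> In v l.

End Digraph.

From Stdlib Require Import ZArith List Lia Relations.
Import ListNotations.
Open Scope Z_scope.

(* Take as vertices at level i the triples (i, a, b) with labels a, b from a
   3-element set, and an edge (i, a, b) -> (i + 1, a', b') iff b <> a'.
   Permuting the labels level by level gives automorphisms.  For two edges
   (u1, v), (u2, v) at level k, swapping the labels of u1 and u2 at levels k
   and k + 1 maps u1 to u2 and fixes v (whose level-(k + 1) label differs from
   both swapped ones) and every vertex above v; so an arc can be matched edge
   by edge, from its last edge backwards.  Delta is not complete bipartite: the
   alternating walk (u, v), (w, v), (w, v') with v' carrying u's own
   level-(k + 1) label puts (u, v) and (w, v') in one class, but (u, v') is
   not an edge. *)

Section Digraphs.
Variables (V : Type) (E : V -> V -> Prop).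

Lemma automorphism_id : is_automorphism V E (fun x => x).
Proof. split; [exists (fun x => x); split; reflexivity | tauto]. Qed.

Lemma automorphism_comp f g :
  is_automorphism V E f -> is_automorphism V E g ->
  is_automorphism V E (fun x => g (f x)).
Proof.
  intros [[f' [Hf1 Hf2]] Hf] [[g' [Hg1 Hg2]] Hg]. split.
  - exists (fun y => f' (g' y)). split; intros; congruence.
  - intros x y. rewrite Hf, Hg. tauto.
Qed.

Definition starts_at (v : V) (l : list (V * V)) : Prop :=
  match l with [] => True | e :: _ => fst e = v end.

Lemma chained_cons e l : chained V (e :: l) -> chained V l /\ starts_at (snd e) l.
Proof. destruct l; simpl; intuition. Qed.

Lemma is_arc_cons n e l : is_arc V E (S n) (e :: l) ->
  is_arc V E n l /\ is_edge V E e /\ starts_at (snd e) l.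
Proof.
  intros [Hlen [Hedges Hchain]]. inversion Hedges; subst.
  destruct (chained_cons _ _ Hchain). injection Hlen as Hlen.
  repeat split; assumption.
Qed.

Lemma connected_of_connected_fibers (phi : V -> Z) :
  is_epi_to_Zline V E phi ->
  (forall x y, phi x = phi y -> clos_refl_sym_trans V E x y) ->
  connected_digraph V E.
Proof.
  intros [_ [Hsurj Hlevel_edge]] Hfiber.
  assert (Hsucc : forall x y, phi y = phi x + 1 -> clos_refl_sym_trans V E x y).
  { intros x y Hxy. destruct (Hlevel_edge (phi x)) as [a [b [Hab [Ha Hb]]]].
    apply rst_trans with a; [apply Hfiber; congruence|].
    apply rst_trans with b; [apply rst_step, Hab|apply Hfiber; congruence]. }
  assert (Hup : forall n x y, phi y = phi x + Z.of_nat n -> clos_refl_sym_trans V E x y).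
  { induction n as [|n IH]; intros x y Hxy.
    - apply Hfiber. lia.
    - destruct (Hsurj (phi x + Z.of_nat n)) as [w Hw].
      apply rst_trans with w; [apply IH; lia|apply Hsucc; lia]. }
  intros x y. destruct (Z_le_gt_dec (phi x) (phi y)).
  - apply (Hup (Z.to_nat (phi y - phi x))). lia.
  - apply rst_sym, (Hup (Z.to_nat (phi x - phi y))). lia.
Qed.

Lemma arc_exists (v0 : V) : (forall v, exists w, E v w) ->
  forall n, exists a, is_arc V E n a.
Proof.
  intros Hout.
  assert (Hfrom : forall n v, exists a, is_arc V E n a /\ starts_at v a).
  { induction n as [|n IH]; intros v.
    - exists []. repeat split; constructor.
    - destruct (Hout v) as [w Hvw]. destruct (IH w) as [a [[Hlen [Hedges Hchain]] Ha]].
      exists ((v, w) :: a). repeat split; simpl; auto.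
      destruct a; simpl in *; auto. }
  intros n. destruct (Hfrom n v0) as [a [Ha _]]. exists a; exact Ha.
Qed.

Lemma path_above (phi : V -> Z) : is_hom_to_Zline V E phi ->
  forall l w, Forall (is_edge V E) l -> chained V l -> starts_at w l ->
  forall e, In e l -> (fst e = w \/ phi w < phi (fst e)) /\ phi w < phi (snd e).
Proof.
  intros Hhom. induction l as [|e0 l IH]; intros w Hedges Hchain Hstart e Hin;
    [destruct Hin|].
  inversion Hedges as [|? ? He0 Hedges']; subst.
  pose proof (Hhom _ _ He0) as Hstep. simpl in Hstart; subst w.
  destruct Hin as [<-|Hin]; [split; [left; reflexivity|lia]|].
  destruct (chained_cons _ _ Hchain) as [Hchain' Hstart'].
  destruct (IH _ Hedges' Hchain' Hstart' e Hin) as [[Hfst|Hfst] Hsnd];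
    split; try right; try rewrite Hfst; lia.
Qed.

Lemma arc_transitive_of_extension :
  (forall v w, exists f, is_automorphism V E f /\ f v = w) ->
  (forall u1 u2 v l, E u1 v -> E u2 v ->
     Forall (is_edge V E) l -> chained V l -> starts_at v l ->
     exists h, is_automorphism V E h /\ h u1 = u2 /\ h v = v /\
               map (map_edge V h) l = l) ->
  forall n a b, is_arc V E n a -> is_arc V E n b ->
    exists f, is_automorphism V E f /\ map (map_edge V f) a = b.
Proof.
  intros Hvertex Hextend n a. revert n.
  induction a as [|e l IH]; intros n b [Hlen Ha] Hb.
  - destruct b as [|e' l']; [|destruct Hb as [Hb _]; simpl in *; lia].
    exists (fun x => x). split; [apply automorphism_id|reflexivity].
  - simpl in Hlen; subst n.
    destruct b as [|e' l']; [destruct Hb as [Hb _]; discriminate|].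
    destruct (is_arc_cons _ _ _ (conj eq_refl Ha)) as [Hl [He Hstart]].
    destruct (is_arc_cons _ _ _ Hb) as [Hl' [He' Hstart']].
    assert (Htail : exists f, is_automorphism V E f /\
                      map (map_edge V f) l = l' /\ f (snd e) = snd e').
    { destruct l as [|e1 l1].
      - destruct l'; [|destruct Hl' as [Hl' _]; discriminate].
        destruct (Hvertex (snd e) (snd e')) as [f [Hf Hfe]]. exists f; auto.
      - destruct (IH _ _ Hl Hl') as [f [Hf Hmap]].
        destruct l' as [|e1' l1']; [discriminate|].
        exists f. split; [exact Hf|split; [exact Hmap|]].
        injection Hmap as Hhead _. simpl in Hstart, Hstart'.
        rewrite <- Hstart, <- Hstart', <- Hhead. reflexivity. }
    destruct Htail as [f [Hf [Hmap Hfv]]].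
    assert (Hfe : E (f (fst e)) (snd e')).
    { rewrite <- Hfv. apply (proj2 Hf (fst e) (snd e)). exact He. }
    destruct Hl' as [_ [Hedges' Hchain']].
    destruct (Hextend _ _ _ _ Hfe He' Hedges' Hchain' Hstart')
      as [h [Hh [Hhu [Hhv Hhl]]]].
    exists (fun x => h (f x)). split; [apply automorphism_comp; assumption|].
    simpl. f_equal.
    + destruct e as [u v], e' as [u' v']. unfold map_edge; simpl in *.
      rewrite Hhu, Hfv, Hhv. reflexivity.
    + rewrite <- Hhl, <- Hmap, map_map. reflexivity.
Qed.

Lemma reachable_refl e : is_edge V E e -> reachable V E e e.
Proof.
  intros He. exists [e]. split; [|simpl; auto].
  split; [discriminate|split; [constructor; auto|exists true; exact I]].
Qed.

Lemma reachable_zigzag e1 e2 e3 :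
  is_edge V E e1 -> is_edge V E e2 -> is_edge V E e3 ->
  snd e1 = snd e2 -> fst e2 = fst e3 -> reachable V E e1 e3.
Proof.
  intros H1 H2 H3 H12 H23. exists [e1; e2; e3]. split; [|simpl; auto 6].
  split; [discriminate|split; [repeat constructor; assumption|]].
  exists false. simpl. auto.
Qed.

Lemma Delta_complete_bipartite_cross e x y x' y' :
  Delta_complete_bipartite V E e ->
  Delta_edge V E e (x, y) -> Delta_edge V E e (x', y') -> Delta_edge V E e (x, y').
Proof.
  intros [A [B [_ [_ Hedge]]]] Hxy Hx'y'.
  apply Hedge in Hxy, Hx'y'. apply Hedge. tauto.
Qed.

End Digraphs.

Inductive label := LA | LB | LC.

Definition label_eq_dec (a b : label) : {a = b} + {a <> b}.
Proof. decide equality. Defined.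

Definition third (a b : label) : label :=
  match a, b with
  | LA, LB | LB, LA => LC
  | LA, LC | LC, LA | LA, LA => LB
  | _, _ => LA
  end.

Lemma third_neq_l a b : a <> third a b.
Proof. destruct a, b; discriminate. Qed.

Lemma third_neq_r a b : b <> third a b.
Proof. destruct a, b; discriminate. Qed.

Definition swap (a b c : label) : label :=
  if label_eq_dec c a then b else if label_eq_dec c b then a else c.

Lemma swapK a b c : swap a b (swap a b c) = c.
Proof. unfold swap; repeat (destruct label_eq_dec; subst; try congruence). Qed.

Lemma swap_l a b : swap a b a = b.
Proof. unfold swap; destruct label_eq_dec; congruence. Qed.

Lemma swap_other a b c : c <> a -> c <> b -> swap a b c = c.
Proof. intros; unfold swap; repeat destruct label_eq_dec; congruence. Qed.

Record vertex := mkV { lvl : Z; cur : label; nxt : label }.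

Definition arrow (v w : vertex) : Prop := lvl w = lvl v + 1 /\ nxt v <> cur w.

Definition relabel (s : Z) (pi : Z -> label -> label) (v : vertex) : vertex :=
  mkV (lvl v + s) (pi (lvl v) (cur v)) (pi (lvl v + 1) (nxt v)).

Lemma relabel_automorphism s pi rho :
  (forall p a, rho p (pi p a) = a) -> (forall p a, pi p (rho p a) = a) ->
  is_automorphism vertex arrow (relabel s pi).
Proof.
  intros HK HK'. split.
  - exists (fun v => mkV (lvl v - s) (rho (lvl v - s) (cur v))
                         (rho (lvl v - s + 1) (nxt v))).
    split; intros [i a b]; unfold relabel; simpl.
    + replace (i + s - s) with i by lia. rewrite !HK. reflexivity.
    + replace (i - s + s) with i by lia. rewrite !HK'. reflexivity.
  - intros [i a b] [j a' b']; unfold arrow, relabel; simpl.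
    split; intros [Hj Hlab]; (assert (j = i + 1) by lia); subst j;
      split; try lia; intro Heq; apply Hlab.
    + rewrite <- (HK (i + 1) b), <- (HK (i + 1) a'). congruence.
    + congruence.
Qed.

Lemma relabel_fixed pi v :
  pi (lvl v) (cur v) = cur v -> pi (lvl v + 1) (nxt v) = nxt v -> relabel 0 pi v = v.
Proof.
  destruct v as [i a b]; unfold relabel; simpl; intros Ha Hb.
  rewrite Ha, Hb, Z.add_0_r. reflexivity.
Qed.

Definition swaps_to (u u' : vertex) (p : Z) : label -> label :=
  if Z.eq_dec p (lvl u) then swap (cur u) (cur u')
  else if Z.eq_dec p (lvl u + 1) then swap (nxt u) (nxt u')
  else fun a => a.

Lemma swaps_toK u u' p a : swaps_to u u' p (swaps_to u u' p a) = a.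
Proof. unfold swaps_to; repeat destruct Z.eq_dec; auto using swapK. Qed.

Lemma swaps_to_automorphism s u u' :
  is_automorphism vertex arrow (relabel s (swaps_to u u')).
Proof. apply relabel_automorphism with (swaps_to u u'); apply swaps_toK. Qed.

Lemma relabel_swaps_to s u u' :
  relabel s (swaps_to u u') u = mkV (lvl u + s) (cur u') (nxt u').
Proof.
  unfold relabel, swaps_to.
  destruct (Z.eq_dec (lvl u) (lvl u)); [|congruence].
  destruct (Z.eq_dec (lvl u + 1) (lvl u)); [lia|].
  destruct (Z.eq_dec (lvl u + 1) (lvl u + 1)); [|congruence].
  rewrite !swap_l. reflexivity.
Qed.

Lemma vertex_transitive v w :
  exists f, is_automorphism vertex arrow f /\ f v = w.
Proof.
  exists (relabel (lvl w - lvl v) (swaps_to v w)).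
  split; [apply swaps_to_automorphism|].
  rewrite relabel_swaps_to. destruct w as [j a b]; simpl. f_equal. lia.
Qed.

Lemma swaps_to_fixes_above u1 u2 v z :
  arrow u1 v -> arrow u2 v -> lvl v < lvl z \/ z = v ->
  relabel 0 (swaps_to u1 u2) z = z.
Proof.
  intros [Hv1 Hn1] [Hv2 Hn2] [Hz|<-]; apply relabel_fixed; unfold swaps_to;
    repeat destruct Z.eq_dec; try lia; try reflexivity.
  apply swap_other; congruence.
Qed.

Lemma arrow_extension u1 u2 v l :
  arrow u1 v -> arrow u2 v ->
  Forall (is_edge vertex arrow) l -> chained vertex l -> starts_at vertex v l ->
  exists h, is_automorphism vertex arrow h /\ h u1 = u2 /\ h v = v /\
            map (map_edge vertex h) l = l.
Proof.
  intros H1 H2 Hedges Hchain Hstart.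
  pose proof (fun z => swaps_to_fixes_above u1 u2 v z H1 H2) as Hfix.
  pose proof (path_above _ _ lvl (fun x y H => proj1 H) l v Hedges Hchain Hstart)
    as Habove.
  exists (relabel 0 (swaps_to u1 u2)).
  split; [apply swaps_to_automorphism|split; [|split]].
  - rewrite relabel_swaps_to.
    destruct u2 as [k a b]; destruct H1, H2; simpl in *. f_equal. lia.
  - apply Hfix. right; reflexivity.
  - rewrite <- (map_id l) at 2. apply map_ext_in. intros [x y] Hin.
    destruct (Habove _ Hin) as [Hx Hy]; simpl in *.
    unfold map_edge; simpl. rewrite !Hfix; [reflexivity|lia|].
    destruct Hx; [right|left]; assumption.
Qed.

Lemma arrow_highly_arc_transitive : highly_arc_transitive vertex arrow.
Proof.
  intros n. split.
  - apply (arc_exists _ _ (mkV 0 LA LA)). intros v.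
    exists (mkV (lvl v + 1) (third (nxt v) (nxt v)) LA).
    split; [reflexivity|apply third_neq_l].
  - intros a b.
    exact (arc_transitive_of_extension _ _ vertex_transitive arrow_extension n a b).
Qed.

(* Two vertices of the same level have a common out-neighbour. *)
Lemma arrow_connected_fibers v w :
  lvl v = lvl w -> clos_refl_sym_trans vertex arrow v w.
Proof.
  intros Hvw. apply rst_trans with (mkV (lvl v + 1) (third (nxt v) (nxt w)) LA).
  - apply rst_step. split; [reflexivity|apply third_neq_l].
  - apply rst_sym, rst_step. split; [simpl; lia|apply third_neq_r].
Qed.

Lemma arrow_epi : is_epi_to_Zline vertex arrow lvl.
Proof.
  split; [|split].
  - intros x y [H _]. exact H.
  - intros i. exists (mkV i LA LA). reflexivity.
  - intros i. exists (mkV i LA LA), (mkV (i + 1) LB LA).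
    repeat split; discriminate.
Qed.

Lemma arrow_finite_fibers : finite_fibers vertex lvl.
Proof.
  intros i. exists (map (fun p => mkV i (fst p) (snd p))
                   (list_prod [LA; LB; LC] [LA; LB; LC])).
  intros [j a b] Hj. simpl in Hj; subst j. destruct a, b; cbn; tauto.
Qed.

Lemma arrow_Delta_not_complete_bipartite e :
  is_edge vertex arrow e -> ~ Delta_complete_bipartite vertex arrow e.
Proof.
  destruct e as [u v]. intros Huv Hbip.
  set (w := mkV (lvl u) (cur u) (third (nxt u) (cur v))).
  set (v' := mkV (lvl v) (nxt u) (nxt v)).
  assert (Hwv : arrow w v).
  { split; [apply (proj1 Huv)|apply not_eq_sym, third_neq_r]. }
  assert (Hwv' : arrow w v').
  { split; [apply (proj1 Huv)|apply not_eq_sym, third_neq_l]. }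
  assert (Hcross : Delta_edge vertex arrow (u, v) (u, v')).
  { apply (Delta_complete_bipartite_cross _ _ _ u v w v' Hbip).
    - split; [exact Huv|apply reachable_refl, Huv].
    - split; [exact Hwv'|].
      apply (reachable_zigzag _ _ _ (w, v)); auto. }
  destruct Hcross as [[_ Hn] _]. apply Hn. reflexivity.
Qed.

Theorem mainTheorem3 :
  exists (V : Type) (E : V -> V -> Prop) (phi : V -> Z),
    connected_digraph V E /\
    highly_arc_transitive V E /\
    is_epi_to_Zline V E phi /\
    finite_fibers V phi /\
    (forall e : V * V, is_edge V E e -> ~ Delta_complete_bipartite V E e).
Proof.
  exists vertex, arrow, lvl.
  split; [exact (connected_of_connected_fibers _ _ _ arrow_epi arrow_connected_fibers)|].
  split; [exact arrow_highly_arc_transitive|].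
  split; [exact arrow_epi|].
  split; [exact arrow_finite_fibers|exact arrow_Delta_not_complete_bipartite].
Qed.
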